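(* Let $G$ be a locally compact, Hausdorff, étale groupoid and $\alpha$ an automorphism of $G$. The groupoid $G^\infty_\alpha$ is minimal if and only if for each $y \in G^{(0)}$ the set $\bigcup_{n\le 0}\alpha^n([y])$ is dense in $G^{(0)}$. In particular, if $G$ is minimal, so is $G^\infty_\alpha$.
   Context: Let $E$ be the directed graph with one vertex $v$ and countably infinitely many edges $e_1,e_2,\dots$. Let $E^*$ be its finite paths (including $v$), $E^\infty$ its infinite paths, $P = E^*\sqcup E^\infty$, $|\mu|$ the length. $H_\infty$ is the groupoid $\{(\alpha x, |\alpha|-|\beta|, \beta x) : x\in P, \alpha,\beta\in E^*\}\subseteq P\times\mathbb{Z}\times P$ with $(x,m,y)(y,n,z)=(x,m+n,z)$, $(x,m,y)^{-1}=(y,-m,x)$, unit space identified with $P$, topology generated by the sets $Z((\alpha,\beta)\setminus F)=\{(\alpha x,|\alpha|-|\beta|,\beta x): x\in P, x\text{ does not begin with an edge in }F\}$ ($F$ finite); $c(x,m,y)=m$. An automorphism is a structure-preserving homeomorphism. $G^\infty_\alpha$ is $H_\infty\times G$ with product topology, unit space $H_\infty^{(0)}\times G^{(0)}$, $r(h,g)=(r(h),r(g))$, $s(h,g)=(s(h),\alpha^{c(h)}(s(g)))$, product $(h_1,g_1)(h_2,g_2)=(h_1h_2,g_1\alpha^{-c(h_1)}(g_2))$, inverse $(h,g)^{-1}=(h^{-1},\alpha^{c(h)}(g^{-1}))$. For $u \in G^{(0)}$, $[u] = \{r(g) : s(g) = u\}$; a groupoid is minimal if every orbit is dense in its unit space.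 *)

From HB Require Import structures.
From mathcomp Require Import all_boot all_order all_algebra.
From mathcomp Require Import all_classical topology.

Set Implicit Arguments.
Unset Strict Implicit.
Unset Printing Implicit Defensive.
Import Order.TTheory GRing.Theory Num.Theory.
Local Open Scope classical_set_scope.
Local Open Scope ring_scope.

(* A groupoid on a carrier type [G]: range and source maps, a (total) binary
   operation that is meaningful on composable pairs [(g,h)] with
   [g_s g = g_r h], and an inverse. *)
Record groupoid (G : Type) := Groupoid {
  g_r : G -> G;
  g_s : G -> G;
  g_mul : G -> G -> G;
  g_inv : G -> G }.

Definition is_groupoid (G : Type) (Gd : groupoid G) : Prop :=
  let r := g_r Gd in let s := g_s Gd in
  let m := g_mul Gd in let i := g_inv Gd in
  [/\ (forall g, [/\ r (r g) = r g, s (r g) = r g,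
                      r (s g) = s g & s (s g) = s g]),
      (forall g h, s g = r h -> r (m g h) = r g /\ s (m g h) = s h),
      (forall g h k, s g = r h -> s h = r k -> m (m g h) k = m g (m h k)),
      (forall g, m (r g) g = g /\ m g (s g) = g) &
      (forall g, [/\ r (i g) = s g, s (i g) = r g,
                     m g (i g) = r g & m (i g) g = s g])].

Definition g_units (G : Type) (Gd : groupoid G) : set G := range (g_r Gd).

Definition g_orbit (G : Type) (Gd : groupoid G) (u : G) : set G :=
  [set g_r Gd g | g in [set g | g_s Gd g = u]].

(* g_minimal: every g_orbit of a unit is dense in the unit space (for the
   subspace topology; since orbits lie in G^(0), this is G^(0) `<=` closure) *)
Definition g_minimal (G : topologicalType) (Gd : groupoid G) : Prop :=
  forall u, g_units Gd u -> g_units Gd `<=` closure (g_orbit Gd u).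

Definition lch_etale_groupoid (G : topologicalType) (Gd : groupoid G) : Prop :=
  [/\ is_groupoid Gd,
      [/\ continuous (g_r Gd), continuous (g_s Gd) & continuous (g_inv Gd)],
      {within [set p : G * G | g_s Gd p.1 = g_r Gd p.2],
         continuous (fun p : G * G => g_mul Gd p.1 p.2)},
      (* etale: r is a local homeomorphism *)
      (forall g : G, exists U : set G, [/\ open U, U g,
          (forall x y, U x -> U y -> g_r Gd x = g_r Gd y -> x = y) &
          (forall V, open V -> V `<=` U -> open (g_r Gd @` V))]) &
      locally_compact [set: G] /\ hausdorff_space G].

Definition automorphism (G : topologicalType) (Gd : groupoid G)
  (a ai : G -> G) : Prop :=
  [/\ cancel a ai /\ cancel ai a,
      continuous a /\ continuous ai,
      (forall g, a (g_r Gd g) = g_r Gd (a g) /\ a (g_s Gd g) = g_s Gd (a g)),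
      (forall g h, g_s Gd g = g_r Gd h -> a (g_mul Gd g h) = g_mul Gd (a g) (a h)) &
      (forall g, a (g_inv Gd g) = g_inv Gd (a g))].

Definition autpow (G : Type) (a ai : G -> G) (n : int) : G -> G :=
  match n with
  | Posz k => iter k a
  | Negz k => iter k.+1 ai
  end.

(** * The graph E: one vertex v, edges e_0, e_1, ... (indexed by nat) *)
(* Paths: finite paths (sequences of edges; [Fin [::]] is the vertex v)
   or infinite paths. *)
Inductive path := Fin of seq nat | Inf of (nat -> nat).

Definition path_cons (e : nat) (x : path) : path :=
  match x with
  | Fin b => Fin (e :: b)
  | Inf f => Inf (fun n => if n is k.+1 then f k else e)
  end.

Fixpoint pcat (al : seq nat) (x : path) : path :=
  match al with
  | [::] => x
  | e :: al' => path_cons e (pcat al' x)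
  end.

Definition begins_in (F : seq nat) (x : path) : Prop :=
  match x with
  | Fin (e :: _) => e \in F
  | Fin [::] => False
  | Inf f => f 0%N \in F
  end.

Definition in_Hinf (t : path * int * path) : Prop :=
  exists (al be : seq nat) (z : path),
    t = (pcat al z, (size al)%:Z - (size be)%:Z, pcat be z).

Definition Hinf := {t : path * int * path | in_Hinf t}.

Definition Hval (h : Hinf) : path * int * path := proj1_sig h.

Lemma in_Hinf_unit (x : path) : in_Hinf (x, 0, x).
Proof. by exists [::], [::], x; rewrite subrr. Qed.

Definition Hunit (x : path) : Hinf := exist _ (x, 0, x) (in_Hinf_unit x).

Lemma in_Hinf_inv (h : Hinf) :
  in_Hinf ((Hval h).2, - (Hval h).1.2, (Hval h).1.1).
Proof.
case: h => [[[x m] y] [al [be [z E]]]] /=; case: E => -> -> ->.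
by exists be, al, z; rewrite opprB.
Qed.

HB.instance Definition _ := gen_eqMixin Hinf.
HB.instance Definition _ := gen_choiceMixin Hinf.
HB.instance Definition _ := isPointed.Build Hinf (Hunit (Fin [::])).

Definition H_r (h : Hinf) : Hinf := Hunit (Hval h).1.1.
Definition H_s (h : Hinf) : Hinf := Hunit (Hval h).2.
Definition H_c (h : Hinf) : int := (Hval h).1.2.
Definition H_inv (h : Hinf) : Hinf := exist _ _ (in_Hinf_inv h).
(* (x,m,y)(y,n,z) = (x,m+n,z); the triple always lies in H_infinity for
   composable pairs; outside composable pairs the value is irrelevant *)
Definition H_mul (h1 h2 : Hinf) : Hinf :=
  let t := ((Hval h1).1.1, (Hval h1).1.2 + (Hval h2).1.2, (Hval h2).2) in
  match pselect (exists h : Hinf, Hval h = t) with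
  | left e => projT1 (cid e)
  | right _ => h1
  end.

Definition Hgroupoid : groupoid Hinf := Groupoid H_r H_s H_mul H_inv.

Definition Zset (al be F : seq nat) : set Hinf :=
  [set h | exists x : path, ~ begins_in F x /\
     Hval h = (pcat al x, (size al)%:Z - (size be)%:Z, pcat be x)].

Definition Zindex := (seq nat * seq nat * seq nat)%type.
Definition Zidx : Type := Zindex.
HB.instance Definition _ := gen_eqMixin Zidx.
HB.instance Definition _ := gen_choiceMixin Zidx.
HB.instance Definition _ := isPointed.Build Zidx ([::], [::], [::]).

HB.instance Definition _ := @isSubBaseTopological.Build Hinf Zidx setT
  (fun i : Zidx => Zset i.1.1 i.1.2 i.2).

Section Ginf.
Variables (G : topologicalType) (Gd : groupoid G) (a ai : G -> G).
Local Notation ap := (autpow a ai).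

Definition Ginf_r (p : Hinf * G) : Hinf * G :=
  (H_r p.1, g_r Gd p.2).
Definition Ginf_s (p : Hinf * G) : Hinf * G :=
  (H_s p.1, ap (H_c p.1) (g_s Gd p.2)).
Definition Ginf_mul (p q : Hinf * G) : Hinf * G :=
  (H_mul p.1 q.1, g_mul Gd p.2 (ap (- H_c p.1) q.2)).
Definition Ginf_inv (p : Hinf * G) : Hinf * G :=
  (H_inv p.1, ap (H_c p.1) (g_inv Gd p.2)).

Definition Ginf : groupoid (Hinf * G) :=
  Groupoid Ginf_r Ginf_s Ginf_mul Ginf_inv.
End Ginf.

(* Every
   neighbourhood of a unit x' of H_infinity contains all units al e w, where al
   is a long enough prefix of x' and the edge e avoids the finitely many edges
   excluded by the neighbourhood.  For the "if" part, to reach a neighbourhood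
   of the unit (x', u') from the unit (x, u), density of the backward orbit of
   y := a^-(|al|+1) u gives g with s g = y and a^-k (r g) near u' for some k;
   the arrow (al e^(k+1) x, |al|+k+1, x) paired with a^-k g then goes from
   (x, u) into that neighbourhood, the k extra copies of e compensating the
   exponent -k.  For the "only if" part, an arrow of G^infty_a with source
   (v, y) has first component (al v, |al|, v), so its second component g
   satisfies a^|al| (s g) = y, which puts r g into a^-|al| [y]. *)

From HB Require Import structures.
From mathcomp Require Import all_boot all_order all_algebra finmap.
From mathcomp Require Import all_classical topology.
Import Order.TTheory GRing.Theory Num.Theory.
Local Open Scope classical_set_scope.
Local Open Scope ring_scope.

Lemma iter_can {T : Type} {f g : T -> T} n :
  cancel f g -> cancel (iter n f) (iter n g).
Proof. by move=> fK; elim: n => // n IHn x; rewrite iterSr iterS fK IHn. Qed.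

Lemma iter_morph {T : Type} {f h : T -> T} n :
  {morph h : x / f x} -> {morph h : x / iter n f x}.
Proof. by move=> hf; elim: n => // n IHn x; rewrite !iterS hf IHn. Qed.

Lemma can_morph {T : Type} {f g h : T -> T} : cancel f g -> cancel g f ->
  {morph h : x / f x} -> {morph h : x / g x}.
Proof. by move=> fK gK hf x; apply: (can_inj fK); rewrite -hf !gK. Qed.

Lemma autpow_nonneg (T : Type) (a ai : T -> T) (n : int) :
  0 <= n -> autpow a ai n = iter `|n|%N a.
Proof. by case: n. Qed.

Lemma autpow_nonpos (T : Type) (a ai : T -> T) (n : int) :
  n <= 0 -> autpow a ai n = iter `|n|%N ai.
Proof. by case: n => // -[]. Qed.

Lemma path_cons_inj e e' y y' :
  path_cons e y = path_cons e' y' -> e = e' /\ y = y'.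
Proof.
case: y => [b|f]; case: y' => [b'|f'] //=; first by case=> -> ->.
case=> eq_f; split; first exact: (congr1 (fun h => h 0%N) eq_f).
by congr Inf; apply: funext => k; exact: (congr1 (fun h => h k.+1) eq_f).
Qed.

Lemma pcat_cat al be x : pcat (al ++ be) x = pcat al (pcat be x).
Proof. by elim: al => //= e al ->. Qed.

Lemma pcat_inj al be x : size al = size be -> pcat al x = pcat be x -> al = be.
Proof.
elim: al be => [|e al IHal] [|e' be] //= [eq_size] /path_cons_inj [-> eq_x].
by rewrite (IHal be eq_size eq_x).
Qed.

Lemma pcat_eq_vertex be x : pcat be x = Fin [::] -> be = [::].
Proof. by case: be => // e be /=; case: (pcat be x). Qed.

Lemma begins_in_cons F e y : begins_in F (path_cons e y) <-> e \in F.
Proof. by case: y. Qed.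

Fixpoint itake (n : nat) (f : nat -> nat) : seq nat :=
  if n is n'.+1 then f 0%N :: itake n' (fun k => f k.+1) else [::].

Definition ptake (n : nat) (x : path) : seq nat :=
  match x with Fin b => take n b | Inf f => itake n f end.

Lemma ptake_cons n e y : ptake n.+1 (path_cons e y) = e :: ptake n y.
Proof. by case: y. Qed.

Lemma ptake_pcat al x n : ptake (size al + n) (pcat al x) = al ++ ptake n x.
Proof. by elim: al => //= e al IHal; rewrite addSn ptake_cons IHal. Qed.

Lemma not_begins_in_ptake F x y n : ~ begins_in F x -> ~ begins_in F y ->
  ~ begins_in F (pcat (ptake n x) y).
Proof.
case: n => [|n] //; case: x => [[|e b]|f] //= x_F _.
- by case: n => [|n] /begins_in_cons.
- by move=> /begins_in_cons.
Qed.

Lemma nbhs_Hinf_Zsets (p : Hinf) (U : set Hinf) : nbhs p U ->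
  exists s : seq Zidx, (forall i, i \in s -> Zset i.1.1 i.1.2 i.2 p) /\
    (forall q, (forall i, i \in s -> Zset i.1.1 i.1.2 i.2 q) -> U q).
Proof.
rewrite nbhsE => -[B [[D sD <-] [A DA Ap] BU]].
have [s _ EA] := sD _ DA.
exists s; split => [i si|q sq]; first by move: Ap; rewrite -EA; apply.
by apply: BU; exists A => //; change (A q); rewrite -EA => i /sq.
Qed.

Lemma Zset_Hunit al be F x : Zset al be F (Hunit x) ->
  al = be /\ exists2 z, x = pcat al z & ~ begins_in F z.
Proof.
move=> [z [z_F [x_al]]] /esym/eqP; rewrite subr_eq0 eqz_nat => /eqP eq_size x_be.
split; first exact: pcat_inj eq_size (etrans (esym x_al) x_be).
by exists z.
Qed.

Lemma Zset_Hunit_extend al F x n e w :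
  Zset al al F (Hunit x) -> (size al <= n)%N -> e \notin F ->
  Zset al al F (Hunit (pcat (ptake n x) (path_cons e w))).
Proof.
move=> /Zset_Hunit [_ [z -> z_F]] al_n eF.
exists (pcat (ptake (n - size al) z) (path_cons e w)); split.
  by apply: not_begins_in_ptake => // /begins_in_cons; apply/negP.
by rewrite subrr -{1}(subnKC al_n) ptake_pcat pcat_cat.
Qed.

Lemma nbhs_Hunit_cylinder x (U : set Hinf) : nbhs (Hunit x) U ->
  exists al e, forall w, U (Hunit (pcat al (path_cons e w))).
Proof.
move=> /nbhs_Hinf_Zsets [s [s_x s_U]].
pose fresh := (\max_(i <- s) \max_(j <- i.2) j).+1.
exists (ptake (\max_(i <- s) size i.1.1) x), fresh => w.
apply: s_U => -[[al be] F] si; have /= x_i := s_x _ si.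
case/Zset_Hunit: (x_i) => eq_al_be _; subst be.
apply: Zset_Hunit_extend x_i _ _.
  exact: leq_bigmax_seq ((al, al, F) : Zidx) si isT.
apply/negP => F_fresh.
have fresh_le : (fresh <= \max_(j <- F) j)%N by exact: leq_bigmax_seq.
have F_le : (\max_(j <- F) j <= \max_(i <- s) \max_(j <- i.2) j)%N.
  exact: leq_bigmax_seq ((al, al, F) : Zidx) si isT.
by have := leq_trans fresh_le F_le; rewrite ltnn.
Qed.

Lemma in_Hinf_shift be x : in_Hinf (pcat be x, (size be)%:Z, x).
Proof. by exists be, [::], x; rewrite subr0. Qed.

Definition Hshift be x : Hinf := exist _ _ (in_Hinf_shift be x).

Lemma H_c_ge0_from_vertex h : (Hval h).2 = Fin [::] -> 0 <= H_c h.
Proof.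
case: h => t; rewrite /H_c /= => -[al [be [z ->]]] /= /pcat_eq_vertex ->.
by rewrite subr0.
Qed.

Section Ginf_minimality.
Variables (G : topologicalType) (Gd : groupoid G) (a ai : G -> G).
Local Notation r := (g_r Gd).
Local Notation s := (g_s Gd).

Definition backward_orbit (y : G) : set G :=
  \bigcup_(n in [set n : int | n <= 0]) (autpow a ai n @` g_orbit Gd y).

Definition dense_backward_orbits : Prop :=
  forall y, g_units Gd y -> g_units Gd `<=` closure (backward_orbit y).

Lemma Ginf_units_Hunit x u : g_units Gd u -> g_units (Ginf Gd a ai) (Hunit x, u).
Proof. by case=> g _ <-; exists (Hunit x, g). Qed.

Lemma dense_backward_orbits_of_minimal :
  g_minimal Gd -> dense_backward_orbits.
Proof.
move=> minimal y y_unit w w_unit; apply: closureS (minimal y y_unit w w_unit).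
by move=> z z_y; exists 0 => //; exists z.
Qed.

Hypotheses (aK : cancel a ai) (aiK : cancel ai a).
Hypotheses (a_r : {morph r : g / a g}) (a_s : {morph s : g / a g}).

Lemma iter_a_s k : {morph s : g / iter k a g}.
Proof. exact: iter_morph. Qed.

Lemma iter_ai_r k : {morph r : g / iter k ai g}.
Proof. exact: iter_morph (can_morph aK aiK a_r). Qed.

Lemma iter_ai_s k : {morph s : g / iter k ai g}.
Proof. exact: iter_morph (can_morph aK aiK a_s). Qed.

Lemma Ginf_minimal_of_dense_backward_orbits :
  dense_backward_orbits -> g_minimal (Ginf Gd a ai).
Proof.
move=> dense _ [[h0 q0] _ <-] _ [[h1 q1] _ <-] B [[U W] /= [U_h1 W_q1] UW_B].
have /nbhs_Hunit_cylinder [al [e cyl]] := U_h1.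
pose y := iter (size al).+1 ai (r q0).
have y_unit : g_units Gd y.
  by exists (iter (size al).+1 ai q0) => //; rewrite iter_ai_r.
have q1_unit : g_units Gd (r q1) by exists q1.
have [_ [[n n_le0 [_ [g g_y <-] <-]] W_g]] := dense y y_unit _ q1_unit W W_q1.
rewrite autpow_nonpos // in W_g; set k := `|n|%N in W_g.
exists (Ginf_r Gd (Hshift (al ++ e :: nseq k e) (Hval h0).1.1, iter k ai g)).
split; last first.
  apply: UW_B; split; last by rewrite /= iter_ai_r.
  by rewrite /Ginf_r /H_r /= pcat_cat; exact: cyl.
exists (Hshift (al ++ e :: nseq k e) (Hval h0).1.1, iter k ai g) => //.
rewrite /= /Ginf_s /Ginf_r /=; congr pair.
rewrite iter_ai_s g_y /y -iterD size_cat /= size_nseq addnS -addSn addnC.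
exact: iter_can.
Qed.

Lemma dense_backward_orbits_of_Ginf_minimal :
  g_minimal (Ginf Gd a ai) -> dense_backward_orbits.
Proof.
move=> minimal y y_unit w w_unit B w_B.
have vB : nbhs (Hunit (Fin [::]), w) (setT `*` B).
  by exists (setT, B) => //; split => //; exact: filterT.
have [_ [[[h g] hg_y <-] [_ B_g]]] := minimal _ (Ginf_units_Hunit (Fin [::]) _ y_unit)
  _ (Ginf_units_Hunit (Fin [::]) _ w_unit) _ vB.
move: hg_y; rewrite /= /Ginf_s /= => -[h_v _ g_y].
rewrite autpow_nonneg ?H_c_ge0_from_vertex // in g_y; set k := `|H_c h|%N in g_y.
exists (r g); split => //; exists (- k%:Z); first by rewrite /= oppr_le0.
exists (r (iter k a g)); first by exists (iter k a g) => //=; rewrite iter_a_s.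
by rewrite autpow_nonpos ?oppr_le0 // abszN -iter_ai_r iter_can.
Qed.

End Ginf_minimality.

Theorem proposition5p3 (G : topologicalType) (Gd : groupoid G) (a ai : G -> G) :
  lch_etale_groupoid Gd -> automorphism Gd a ai ->
  (g_minimal (Ginf Gd a ai) <->
     (forall y, g_units Gd y ->
        g_units Gd `<=` closure (\bigcup_(n in [set n : int | n <= 0])
                                 (autpow a ai n @` g_orbit Gd y))))
  /\ (g_minimal Gd -> g_minimal (Ginf Gd a ai)).
Proof.
move=> _ [[aK aiK] _ a_rs _ _].
have a_r : {morph g_r Gd : g / a g} by move=> g; rewrite (a_rs g).1.
have a_s : {morph g_s Gd : g / a g} by move=> g; rewrite (a_rs g).2.
split; first split.
- exact: dense_backward_orbits_of_Ginf_minimal.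
- exact: Ginf_minimal_of_dense_backward_orbits.
- by move=> /dense_backward_orbits_of_minimal /Ginf_minimal_of_dense_backward_orbits; apply.
Qed.
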